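(* Let $(S,* )$ be an LD-system. Then $(\widehat S, \vec{*}, \frown)$ is an ALD-system.
   Context: An LD-system is a set with a binary operation $*$ satisfying $x*(y*z)=(x*y)*(x*z)$ (LD). An ALD-system is a set with two binary operations $*,\circ$ satisfying (LD), $x*(y*z)=(x\circ y)*z$ and $x*(y\circ z)=(x*y)\circ(x*z)$. $\widehat S$ is the set of all finite nonempty sequences of elements of $S$; for $\vec s=(s_1,\dots,s_p)$ and $\vec t=(t_1,\dots,t_q)$, $\vec s\frown\vec t=(s_1,\dots,s_p,t_1,\dots,t_q)$ is concatenation and $\vec s\mathbin{\vec{*}}\vec t=(s_1*\cdots*s_p*t_1,\dots,s_1*\cdots*s_p*t_q)$, where missing parentheses are added on the right ($a*b*c$ means $a*(b*c)$). *)

From Stdlib Require Import List.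
Import ListNotations.

Definition LD {S : Type} (op : S -> S -> S) : Prop :=
  forall x y z, op x (op y z) = op (op x y) (op x z).

Definition ALD {S : Type} (op circ : S -> S -> S) : Prop :=
  LD op /\
  (forall x y z, op x (op y z) = op (circ x y) z) /\
  (forall x y z, op x (circ y z) = circ (op x y) (op x z)).

(* Finite nonempty sequences of elements of S: (s1, [s2;...;sp]). *)
Definition neseq (S : Type) : Type := (S * list S)%type.

Definition ne_to_list {S : Type} (s : neseq S) : list S := fst s :: snd s.

Definition neconcat {S : Type} (s t : neseq S) : neseq S :=
  (fst s, snd s ++ ne_to_list t).

Definition iter_op {S : Type} (op : S -> S -> S) (s : neseq S) (u : S) : S :=
  fold_right op u (ne_to_list s).

Definition nevecop {S : Type} (op : S -> S -> S) (s t : neseq S) : neseq S :=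
  (iter_op op s (fst t), map (iter_op op s) (snd t)).

From Stdlib Require Import List.

(* By (LD) every left translation [u |-> x * u] is an endomorphism of [(S, * )], hence so
   is [iter_op op s], a composite of left translations. Since [s vec* t] is [t] mapped by
   [iter_op op s], each ALD identity reduces componentwise to this fact, to
   [iter_op (s ⌢ t) = iter_op s ∘ iter_op t], or to [map] distributing over [++]. *)

Lemma ne_to_list_inj {S : Type} (s t : neseq S) : ne_to_list s = ne_to_list t -> s = t.
Proof. destruct s, t; intros H; injection H as -> ->; reflexivity. Qed.

Lemma ne_to_list_nevecop {S : Type} (op : S -> S -> S) (s t : neseq S) :
  ne_to_list (nevecop op s t) = map (iter_op op s) (ne_to_list t).
Proof. reflexivity. Qed.

Lemma ne_to_list_neconcat {S : Type} (s t : neseq S) :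
  ne_to_list (neconcat s t) = ne_to_list s ++ ne_to_list t.
Proof. reflexivity. Qed.

Lemma fold_right_morph {S : Type} (op : S -> S -> S) (f : S -> S) :
  (forall x y, f (op x y) = op (f x) (f y)) ->
  forall l u, f (fold_right op u l) = fold_right op (f u) (map f l).
Proof.
  intros Hf l u; induction l as [|a l IHl]; simpl; [reflexivity|].
  now rewrite Hf, IHl.
Qed.

Section IteratedTranslation.

Variables (S : Type) (op : S -> S -> S).

Lemma iter_op_neconcat (s t : neseq S) (u : S) :
  iter_op op (neconcat s t) u = iter_op op s (iter_op op t u).
Proof. unfold iter_op; rewrite ne_to_list_neconcat; apply fold_right_app. Qed.

Lemma nevecop_neconcatl (s t u : neseq S) :
  nevecop op s (nevecop op t u) = nevecop op (neconcat s t) u.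
Proof.
  apply ne_to_list_inj; rewrite !ne_to_list_nevecop, map_map.
  apply map_ext; intros a; symmetry; apply iter_op_neconcat.
Qed.

Lemma nevecop_neconcatr (s t u : neseq S) :
  nevecop op s (neconcat t u) = neconcat (nevecop op s t) (nevecop op s u).
Proof.
  apply ne_to_list_inj.
  rewrite ne_to_list_neconcat, !ne_to_list_nevecop, ne_to_list_neconcat.
  apply map_app.
Qed.

Hypothesis opLD : LD op.

Lemma fold_right_LD (l : list S) (x y : S) :
  fold_right op (op x y) l = op (fold_right op x l) (fold_right op y l).
Proof.
  induction l as [|a l IHl]; simpl; [reflexivity|].
  rewrite IHl; apply opLD.
Qed.

Lemma iter_op_morph (s : neseq S) (x y : S) :
  iter_op op s (op x y) = op (iter_op op s x) (iter_op op s y).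
Proof. apply fold_right_LD. Qed.

Lemma iter_op_nevecop (s t : neseq S) (u : S) :
  iter_op op (nevecop op s t) (iter_op op s u) = iter_op op s (iter_op op t u).
Proof.
  unfold iter_op at 1 4; rewrite ne_to_list_nevecop.
  symmetry; apply fold_right_morph, iter_op_morph.
Qed.

Lemma nevecop_LD : LD (nevecop op).
Proof.
  intros s t u; apply ne_to_list_inj.
  rewrite !ne_to_list_nevecop, !map_map.
  apply map_ext; intros a; symmetry; apply iter_op_nevecop.
Qed.

End IteratedTranslation.

Theorem lemma1p7 (S : Type) (op : S -> S -> S) :
  LD op -> ALD (nevecop op) (@neconcat S).
Proof.
  intros opLD; split; [|split].
  - exact (nevecop_LD S op opLD).
  - apply nevecop_neconcatl.
  - apply nevecop_neconcatr.
Qed.
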